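(* Let $u=u(x)$ be a fixed (time-independent) analytic change of coordinates on a domain in $\mathbb C^n$. For each $t$ let $\widetilde L_i(u,t)=\partial/\partial u^i+q_i(u,t)-\hbar^{-1}e_i$, $i=1,\dots,n$, be pairwise commuting, and put $\widetilde L_\alpha(x,t)=\sum_i\frac{\partial u^i}{\partial x^\alpha}\widetilde L_i(u(x),t)$ (so $\widetilde L_\alpha=\partial/\partial x^\alpha+q_\alpha(x,t)-\hbar^{-1}a_\alpha(x)$ with $a_\alpha=diag(\partial u^1/\partial x^\alpha,\dots,\partial u^n/\partial x^\alpha)$). Then, for $b\in Diag[\hbar^{-1}]$, $\{\widetilde L_i(u,t)\}$ satisfies $$\frac{\partial\widetilde L_i}{\partial t}=[\widetilde\varphi(b)_{\le0},\widetilde L_i]\quad\text{for all }i$$ if and only if $\{\widetilde L_\alpha(x,t)\}$ satisfies $$\frac{\partial\widetilde L_\alpha}{\partial t}=[\widetilde\varphi(b)_{\le0},\widetilde L_\alpha]\quad\text{for all }\alpha$$ with the same $b$, where in each case $\widetilde\varphi(b)=\widetilde Tb\widetilde T^{-1}$ with $\widetilde T$ the dressing transformation of the respective family.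
   Context: $e_i$ is the matrix unit $(e_i)_{jk}=\delta_{ij}\delta_{ik}$; $q_i,q_\alpha$ are $Mat(n,\mathbb C)$-valued functions; $Diag$ denotes diagonal matrices and $Diag[\hbar^{-1}]$ polynomials in $\hbar^{-1}$ with constant diagonal coefficients. Dressing transformation of $\{\widetilde L_i(u,t)\}$: for each $t$, a formal series $\widetilde T(\hbar,u,t)=Id+\sum_{k\ge1}\hbar^k\widetilde T_k$ with $\widetilde T^{-1}\widetilde L_i\widetilde T=\partial/\partial u^i-e_i\hbar^{-1}+h_i$, $h_i\in Diag[[\hbar]]$ for all $i$; dressing transformation of $\{\widetilde L_\alpha(x,t)\}$: $\widetilde T(\hbar,x,t)=Id+O(\hbar)$ with $\widetilde T^{-1}\widetilde L_\alpha\widetilde T=\partial/\partial x^\alpha-a_\alpha\hbar^{-1}+h_\alpha$, $h_\alpha\in Diag[[\hbar]]$ for all $\alpha$. Such $\widetilde T$ is unique up to right multiplication by diagonal series, so $\widetilde\varphi(b)$ is well defined. For a Laurent series $v=\sum_lv_l\hbar^l$, $v_{\le k}=\sum_{l\le k}v_l\hbar^l$. Conjugation: $T^{-1}(\partial+A)T=\partial+T^{-1}\partial T+T^{-1}AT$; $[\partial+A,M]=\partial M+[A,M]$; $\partial\widetilde L/\partial t$ means the time derivative of the potential term. *)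

From HB Require Import structures.
From mathcomp Require Import all_boot all_order all_algebra.
From mathcomp Require Import all_classical all_reals all_analysis.
From mathcomp Require Import complex.
Import Order.TTheory GRing.Theory Num.Theory.

Set Implicit Arguments.
Unset Strict Implicit.
Unset Printing Implicit Defensive.

Local Open Scope ring_scope.

(* Formal Laurent series in hbar with coefficients in Mat(n,C), C = R[i]:
   x : lser R n,  x l = coefficient of hbar^l. *)
Definition lser (R : realType) (n : nat) := int -> 'M[R[i]]_n.

Section Series.
Variables (R : realType) (n : nat).
Local Notation C := (R[i]).
Local Notation M := ('M[C]_n).
Local Notation ser := (lser R n).

(* Product of two Laurent series whose supports are contained in [-N, +oo). *)
Definition lmul (N : nat) (x y : ser) : ser := fun l =>
  if l + Posz (2 * N)%N < 0 then 0
  else \sum_(k < (absz (l + Posz (2 * N)%N)).+1) x (Posz k - Posz N) *m y (l - Posz k + Posz N).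

Definition lone : ser := fun l => if l == 0 then 1%:M else 0.

(* Inverse of a formal power series T = Id + O(hbar) (Neumann series
   sum_m (Id - T)^m, truncated where it is exact). *)
Definition sinv (T : ser) : ser := fun l =>
  if l < 0 then 0
  else \sum_(m < (absz l).+1)
         iter m (lmul 0 (fun k => lone k - T k)) lone l.

Definition trunc0 (x : ser) : ser := fun l => if l <= 0 then x l else 0.

Definition lpot (q E : M) : ser := fun l =>
  if l == 0 then q else if l == -1 then - E else 0.

Definition ltarget (E : M) (h : ser) : ser := fun l =>
  if l == -1 then - E else h l.

(* The Laurent polynomial b = sum_k b_k hbar^{-k}. *)
Definition lpolyinv (b : nat -> M) : ser := fun l =>
  if l <= 0 then b (absz l) else 0.

(* Matrix unit e_i and unit row vector (direction of d/du^i). *)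
Definition eunit (i : 'I_n) : M := delta_mx i i.
Definition rdir (i : 'I_n) : 'rV[C]_n := delta_mx 0 i.

(* Complex (Frechet) differentiability at a point, i.e. holomorphy near it. *)
Definition cdiff_rM (f : 'rV[C]_n -> M) (p : 'rV[C]_n) : Prop :=
  differentiable (fun p' : ('rV[C]_n : normedModType C) => f p')
                 (p : ('rV[C]_n : normedModType C)).
Definition cdiff_rr (f : 'rV[C]_n -> 'rV[C]_n) (p : 'rV[C]_n) : Prop :=
  differentiable (fun p' : ('rV[C]_n : normedModType C) => f p')
                 (p : ('rV[C]_n : normedModType C)).
Definition cdiff_CM (f : C -> M) (t : C) : Prop :=
  differentiable (fun s : C^o => f s) (t : C^o).

Definition open_rV (D : set 'rV[C]_n) : Prop :=
  open (D : set ('rV[C]_n : normedModType C)).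
Definition connected_rV (D : set 'rV[C]_n) : Prop :=
  connected (D : set ('rV[C]_n : normedModType C)).
Definition open_C (Th : set C) : Prop := open (Th : set C^o).

Definition pderiv (i : 'I_n) (F : 'rV[C]_n -> ser) : 'rV[C]_n -> ser :=
  fun p l => 'D_(rdir i) (fun p' => F p' l) p.

Definition tderiv (F : C -> ser) : C -> ser :=
  fun t l => 'D_1 (fun s : C^o => F s l) t.

(* {L_i = d_i + A i} is a pairwise commuting family at time t on D:
   [d_i + A_i, d_j + A_j] = d_i A_j - d_j A_i + [A_i, A_j] = 0. *)
Definition commuting (D : set 'rV[C]_n) (A : 'I_n -> 'rV[C]_n -> ser) : Prop :=
  forall i j p, D p -> forall l,
    pderiv i (A j) p l - pderiv j (A i) p l
    + lmul 1 (A i p) (A j p) l - lmul 1 (A j p) (A i p) l = 0.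

(* T is a dressing transformation of {d_i + A i} (on D) with leading
   terms E i:  T = Id + sum_{k>=1} hbar^k T_k and
   T^{-1} (d_i + A_i) T = d_i - E_i hbar^{-1} + h_i,  h_i in Diag[[hbar]],
   where T^{-1} (d + A) T = d + T^{-1} dT + T^{-1} A T. *)
Definition is_dressing (D : set 'rV[C]_n) (A : 'I_n -> 'rV[C]_n -> ser)
    (E : 'I_n -> 'rV[C]_n -> M) (T : 'rV[C]_n -> ser) : Prop :=
  [/\ forall p l, l < 0 -> T p l = 0,
      forall p, T p 0 = 1%:M,
      forall l p, D p -> differentiable (fun p' : ('rV[C]_n : normedModType C) => T p' l) (p : ('rV[C]_n : normedModType C)) &
      exists h : 'I_n -> 'rV[C]_n -> ser,
        [/\ forall i p l, is_diag_mx (h i p l),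
            forall i p l, l < 0 -> h i p l = 0 &
            forall i p, D p -> forall l,
              lmul 1 (sinv (T p)) (pderiv i T p) l
              + lmul 1 (lmul 1 (sinv (T p)) (A i p)) (T p) l
              = ltarget (E i p) (h i p) l]].

(* phi(b)_{<= 0} = (T b T^{-1})_{<= 0}, b of degree <= d in hbar^{-1}. *)
Definition phib_le0 (d : nat) (b : nat -> M) (T : ser) : ser :=
  trunc0 (lmul d (lmul d T (lpolyinv b)) (sinv T)).

(* The Lax equations dA_i/dt = [phi(b)_{<=0}, d_i + A_i] for all i, on D x Theta,
   where [M, d + A] = - dM + M A - A M. *)
Definition lax_eq (D : set 'rV[C]_n) (Th : set C)
    (A : 'I_n -> 'rV[C]_n -> C -> ser) (T : 'rV[C]_n -> C -> ser)
    (d : nat) (b : nat -> M) : Prop :=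
  forall i p t, D p -> Th t -> forall l,
    tderiv (A i p) t l =
      - pderiv i (fun p' => phib_le0 d b (T p' t)) p l
      + lmul d.+1 (phib_le0 d b (T p t)) (A i p t) l
      - lmul d.+1 (A i p t) (phib_le0 d b (T p t)) l.

Definition Au (q : 'I_n -> 'rV[C]_n -> C -> M) : 'I_n -> 'rV[C]_n -> C -> ser :=
  fun i y t => lpot (q i y t) (eunit i).

(* Jacobian entry  du^i/dx^alpha (x). *)
Definition jac (u : 'rV[C]_n -> 'rV[C]_n) (i a : 'I_n) (x : 'rV[C]_n) : C :=
  ('D_(rdir a) u x) 0 i.

(* The x-family potentials: L_alpha = sum_i du^i/dx^alpha L_i(u(x),t). *)
Definition Ax (u : 'rV[C]_n -> 'rV[C]_n) (q : 'I_n -> 'rV[C]_n -> C -> M)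
  : 'I_n -> 'rV[C]_n -> C -> ser :=
  fun a x t l => \sum_(i < n) jac u i a x *: Au q i (u x) t l.

Definition amat (u : 'rV[C]_n -> 'rV[C]_n) (a : 'I_n) (x : 'rV[C]_n) : M :=
  diag_mx (\row_i jac u i a x).

End Series.

From Pilot Require Import Defs.
From HB Require Import structures.
From mathcomp Require Import all_boot all_order all_algebra.
From mathcomp Require Import all_classical all_reals all_analysis.
From mathcomp Require Import complex zify.
From Stdlib Require Setoid.
Import Corelib.Classes.Morphisms (Proper, respectful).
Import Order.TTheory GRing.Theory Num.Theory.

(* Both T(u(x),t) and T'(x,t) dress the x-family, the former by the chain rule
   since L_alpha = sum_i du^i/dx^alpha L_i(u(x)).  Hence T' = T(u) S, and
   conjugating by S relates the two dressed operators:
   S (-a_alpha/hbar + h'_alpha) = d_alpha S + (-a_alpha/hbar + h_alpha) S.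
   At order hbar^m the off-diagonal entry (r,c) of this identity reads
   ((a_alpha)_r - (a_alpha)_c) S_{m+1,rc} = 0, and the invertibility of the
   Jacobian of u provides an alpha separating r from c, so S is diagonal by
   induction.  A diagonal S commutes with b, so phi(b) is the same for T' and
   for T(u).  The Lax defect of L_alpha is then the Jacobian combination of the
   defects of the L_i at u(x), and inverting the Jacobian gives the
   equivalence. *)

Set Implicit Arguments.
Unset Strict Implicit.
Unset Printing Implicit Defensive.

Local Open Scope ring_scope.

(* Only [==>] is taken from the Morphisms notations, whose [-->] clashes with
   the limit notation of MathComp-Analysis. *)
Local Notation "R ==> R'" := (@respectful _ _ R R')
  (at level 55, right associativity) : signature_scope.

Section LaurentSeries.
Variables (R : realType) (n : nat).
Local Notation M := 'M[R[i]]_n.+1.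
Local Notation ser := (lser R n.+1).
Local Notation one := (lone R n.+1).

Definition lsupp (s : nat) (x : ser) := forall l, l < - s%:Z -> x l = 0.

Lemma lsupp_widen s s' x : (s <= s')%N -> lsupp s x -> lsupp s' x.
Proof. by move=> ss' sx l hl; apply: sx; lia. Qed.

Lemma lsupp_add s x y : lsupp s x -> lsupp s y -> lsupp s (fun l => x l + y l).
Proof. by move=> sx sy l hl; rewrite sx ?sy ?addr0. Qed.

Lemma lsupp_lone : lsupp 0 one.
Proof. by move=> l hl; rewrite /lone; case: eqP => // l0; lia. Qed.

Lemma lsupp_sinv x : lsupp 0 (sinv x).
Proof. by move=> l hl; rewrite /sinv hl. Qed.

Lemma lsupp_lmul N s r x y : lsupp s x -> lsupp r y -> lsupp (s + r) (lmul N x y).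
Proof.
move=> sx sy l hl; rewrite /lmul; case: ifP => // _; apply: big1 => k _.
have [hk|hk] := ltP (k%:Z - N%:Z) (- s%:Z); first by rewrite sx ?mul0mx.
by rewrite sy ?mulmx0 //; lia.
Qed.

Lemma lsupp_lmul0 N x y : lsupp 0 x -> lsupp 0 y -> lsupp 0 (lmul N x y).
Proof. exact: lsupp_lmul. Qed.

Lemma lmul_coef0 (x y : ser) : lmul 0 x y 0 = x 0 *m y 0.
Proof. by rewrite /lmul /= big_ord1. Qed.

Lemma sinv_coef0 (x : ser) : sinv x 0 = 1%:M.
Proof. by rewrite /sinv /= big_ord1 /= /lone eqxx. Qed.

Lemma ltarget_nat (E : M) (h : ser) (k : nat) : ltarget E h k = h k.
Proof. by rewrite /ltarget; have -> : (k%:Z == -1) = false by apply/negbTE; lia. Qed.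

Lemma ltarget_lead (E : M) (h : ser) : ltarget E h (-1) = - E.
Proof. by rewrite /ltarget eqxx. Qed.

Lemma lsupp_ltarget (E : M) (h : ser) : (forall l, l < 0 -> h l = 0) -> lsupp 1 (ltarget E h).
Proof.
move=> h0 l l1; rewrite /ltarget; have -> : (l == -1) = false by apply/negbTE; lia.
by rewrite h0 //; lia.
Qed.

(* A series supported in [-s, +oo) is encoded up to order K by the polynomial
   [lpoly s K x] of its first K coefficients; [eqX K] is congruence modulo X^K.
   Identities between products and inverses of series thereby become ring
   identities in {poly M}, proved by setoid rewriting along [eqX K].  Locking
   [lpoly] keeps failed matches against large series expressions cheap. *)
Variant eqX (K : nat) (p q : {poly M}) : Prop :=
  EqX of forall j, (j < K)%N -> p`_j = q`_j.

Fact lpoly_key : unit. Proof. by []. Qed.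
Definition lpoly s K (x : ser) : {poly M} :=
  locked_with lpoly_key (\poly_(j < K) x (j%:Z - s%:Z)).

Lemma lpolyE s K x : lpoly s K x = \poly_(j < K) x (j%:Z - s%:Z).
Proof. exact: unlock. Qed.

#[global] Instance eqX_equivalence K : RelationClasses.Equivalence (eqX K).
Proof. by split=> [p|p q [e]|p q r [e1] [e2]]; split=> j jK; rewrite ?e ?e1 ?e2. Qed.

#[global] Instance eqX_add K : Proper (eqX K ==> eqX K ==> eqX K) +%R.
Proof. by move=> p p' [ep] q q' [eq]; split=> j jK; rewrite !coefD ep ?eq. Qed.

#[global] Instance eqX_opp K : Proper (eqX K ==> eqX K) -%R.
Proof. by move=> p p' [ep]; split=> j jK; rewrite !coefN ep. Qed.

#[global] Instance eqX_mul K : Proper (eqX K ==> eqX K ==> eqX K) *%R.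
Proof.
move=> p p' [ep] q q' [eq]; split=> j jK; rewrite !coefM; apply: eq_bigr => i _.
have ij : (i <= j)%N by rewrite -ltnS.
by rewrite ep ?eq //; [exact: leq_ltn_trans (leq_subr _ _) jK | exact: leq_ltn_trans jK].
Qed.

#[global] Instance eqX_exp K : Proper (eqX K ==> eq ==> eqX K) (@GRing.exp {poly M}).
Proof.
move=> p p' ep m _ <-; elim: m => [|m IH]; first by rewrite !expr0.
by rewrite !exprS IH ep.
Qed.

Lemma coef_lpoly s K x j : (j < K)%N -> (lpoly s K x)`_j = x (j%:Z - s%:Z).
Proof. by move=> jK; rewrite lpolyE coef_poly jK. Qed.

Lemma lpoly_coef0 K x : (lpoly 0 K.+1 x)`_0 = x 0.
Proof. by rewrite coef_lpoly. Qed.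

Lemma lpoly_eq s x y : lsupp s x -> lsupp s y ->
  (forall K, eqX K.+1 (lpoly s K.+1 x) (lpoly s K.+1 y)) -> forall l, x l = y l.
Proof.
move=> sx sy e l; have [ls|ls] := ltP l (- s%:Z); first by rewrite sx ?sy.
have [{}e] := e (absz (l + s%:Z)); have := e _ (ltnSn _); rewrite !coef_lpoly //.
by have -> : (absz (l + s%:Z))%:Z - s%:Z = l by lia.
Qed.

Lemma lpolyD s K x y : lpoly s K (fun l => x l + y l) = lpoly s K x + lpoly s K y.
Proof. by apply/polyP => j; rewrite !lpolyE coefD !coef_poly; case: ifP; rewrite ?addr0. Qed.

Lemma lpolyB s K x y : lpoly s K (fun l => x l - y l) = lpoly s K x - lpoly s K y.
Proof. by apply/polyP => j; rewrite !lpolyE coefB !coef_poly; case: ifP; rewrite ?subr0. Qed.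

Lemma lpoly_lone K : eqX K (lpoly 0 K one) 1.
Proof. by split=> j jK; rewrite coef_lpoly // coefC subr0 /lone; case: j {jK}. Qed.

Lemma lpoly_mulX {s K : nat} {x : ser} :
  lsupp s x -> eqX K (lpoly s.+1 K x) ('X * lpoly s K x).
Proof.
move=> sx; split=> -[|j] jK; rewrite coefXM coef_lpoly //=; first by rewrite sx //; lia.
by rewrite coef_lpoly 1?ltnW //; congr x; lia.
Qed.

Lemma lpoly_lmul {N K s r t : nat} {x y : ser} : lsupp s x -> lsupp r y ->
  (s <= N)%N -> (r <= N)%N -> t = (s + r)%N ->
  eqX K (lpoly t K (lmul N x y)) (lpoly s K x * lpoly r K y).
Proof.
move=> sx sy sN rN ->; split=> j jK; rewrite coef_lpoly // /lmul.
have -> : j%:Z - (s + r)%N%:Z + (2 * N)%N%:Z = ((j + 2 * N) - (s + r))%N%:Z by lia.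
have -> : (Posz ((j + 2 * N) - (s + r))%N < 0) = false by apply/negbTE; lia.
rewrite /= coefM.
rewrite -(big_mkord xpredT (fun k => x (k%:Z - N%:Z) *m y (j%:Z - (s + r)%N%:Z - k%:Z + N%:Z))).
rewrite (@big_cat_nat _ _ _ (N - s)) //=; last by lia.
rewrite [X in _ + X](@big_cat_nat _ _ _ ((N - s) + j.+1)) //=; [|lia|lia].
rewrite big_nat_cond big1 /=; last by move=> k /andP[hk _]; rewrite sx ?mul0mx //; lia.
rewrite add0r [X in _ + X]big_nat_cond [X in _ + X]big1 /=; last first.
  by move=> k /andP[/andP[hk hk'] _]; rewrite sy ?mulmx0 //; lia.
rewrite addr0 -{1}[(N - s)%N]add0n big_addn.
have -> : ((N - s) + j.+1 - (N - s))%N = j.+1 by lia.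
rewrite big_mkord; apply: eq_bigr => i _.
have ij : (i <= j)%N by rewrite -ltnS.
rewrite !coef_lpoly; [|exact: leq_ltn_trans (leq_subr _ _) jK|exact: leq_ltn_trans jK].
by rewrite mulmxE; congr (x _ * y _); lia.
Qed.

Definition trinv K (p : {poly M}) : {poly M} := \sum_(m < K) (1 - p) ^+ m.

#[global] Instance trinv_eqX K : Proper (eqX K ==> eqX K) (trinv K).
Proof.
move=> p p' e; apply: (big_ind2 (eqX K)) => [|q q' r r' eq er|m _].
- reflexivity.
- by rewrite eq er.
- by rewrite e.
Qed.

Lemma coef_expr_lt (c : {poly M}) m j : c`_0 = 0 -> (j < m)%N -> (c ^+ m)`_j = 0.
Proof.
move=> c0; elim: m j => [//|m IH] j jm; rewrite exprS coefM big1 // => i _.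
case: (nat_of_ord i) (ltn_ord i) => [|i'] hi; first by rewrite c0 mul0r.
by rewrite IH ?mulr0 //; lia.
Qed.

Lemma eqX_subr_exprK K (c : {poly M}) : c`_0 = 0 -> eqX K (1 - c ^+ K) 1.
Proof. by move=> c0; split=> j jK; rewrite coefB coef_expr_lt // subr0. Qed.

Lemma eqX_mul_trinv K (p : {poly M}) : p`_0 = 1 -> eqX K (p * trinv K p) 1.
Proof.
move=> p0; set c := 1 - p; have c0 : c`_0 = 0 by rewrite coefB p0 coefC subrr.
have pE : p = 1 - c by rewrite /c opprB addrC subrK.
rewrite {1}pE /trinv -/c -[1 - c]opprB mulNr -subrX1 opprB.
exact: eqX_subr_exprK.
Qed.

Lemma eqX_trinv_mul K (p : {poly M}) : p`_0 = 1 -> eqX K (trinv K p * p) 1.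
Proof.
move=> p0; suff <- : p * trinv K p = trinv K p * p by exact: eqX_mul_trinv.
apply: commr_sum => m _; apply: commrX.
by apply: commrB; [exact: commr1 | exact: commr_refl].
Qed.

Lemma eqX_trinvM K (r s : {poly M}) : r`_0 = 1 -> s`_0 = 1 ->
  eqX K (trinv K (r * s)) (trinv K s * trinv K r).
Proof.
move=> r0 s0; have rs0 : (r * s)`_0 = 1 by rewrite coef0M r0 s0 mulr1.
have e : eqX K (r * s * (trinv K s * trinv K r)) 1.
  by rewrite mulrA -(mulrA r) eqX_mul_trinv // mulr1 eqX_mul_trinv.
by rewrite -[X in eqX _ X]mulr1 -e mulrA eqX_trinv_mul // mul1r.
Qed.

Lemma lpoly_sinv K x : lsupp 0 x -> x 0 = 1%:M ->
  eqX K (lpoly 0 K (sinv x)) (trinv K (lpoly 0 K x)).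
Proof.
move=> sx x0; set f := lmul 0 (fun k => one k - x k); set p := lpoly 0 K x.
have sf : lsupp 0 (fun k => one k - x k).
  by apply: lsupp_add => [|l hl]; [exact: lsupp_lone | rewrite sx ?oppr0].
have iterE m : lsupp 0 (iter m f one) /\ eqX K (lpoly 0 K (iter m f one)) ((1 - p) ^+ m).
  elim: m => [|m [sm em]]; first by split; [exact: lsupp_lone | rewrite expr0 lpoly_lone].
  split; first exact: lsupp_lmul0.
  by rewrite iterS (lpoly_lmul sf sm) // lpolyB lpoly_lone em exprS.
split=> j jK; rewrite coef_lpoly // subr0 /sinv /=.
have c0 : (1 - p)`_0 = 0 by rewrite coefB coef_lpoly ?subr0 ?x0 ?coefC ?subrr //; lia.
rewrite /trinv coef_sum (big_ord_widen K (fun m => iter m f one j%:Z)) // big_mkcond.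
apply: eq_bigr => m _; case: ifPn => [mj | ]; last by rewrite -leqNgt => jm; rewrite coef_expr_lt.
by have [<-] := (iterE m).2; rewrite // coef_lpoly // subr0.
Qed.

Lemma lpoly_diagC s s' K x y :
  (forall l, is_diag_mx (x l)) -> (forall l, is_diag_mx (y l)) ->
  GRing.comm (lpoly s K x) (lpoly s' K y).
Proof.
have diag_coef t z m : (forall l, is_diag_mx (z l)) -> is_diag_mx (lpoly t K z)`_m.
  by move=> dz; rewrite lpolyE coef_poly; case: ifP => _; [exact: dz | exact: mx0_is_diag].
move=> dx dy; apply/polyP => j; rewrite coefM coefMr; apply: eq_bigr => i _.
move: (diag_coef s x i dx) (diag_coef s' y (j - i)%N dy).
by move=> /diag_mxP[a ->] /diag_mxP[c ->]; rewrite -!mulmxE diag_mxC.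
Qed.

Lemma lsupp_lpolyinv d (b : nat -> M) :
  (forall k, (d < k)%N -> b k = 0) -> lsupp d (lpolyinv b).
Proof. by move=> bd k hk; rewrite /lpolyinv; case: ifP => // _; apply: bd; lia. Qed.

Lemma lpolyinv_diag (b : nat -> M) :
  (forall k, is_diag_mx (b k)) -> forall l, is_diag_mx (lpolyinv b l).
Proof. by move=> db l; rewrite /lpolyinv; case: ifP => _ //; exact: mx0_is_diag. Qed.

Lemma lmul_sinvK T Q : lsupp 0 T -> T 0 = 1%:M -> lsupp 0 Q ->
  lmul 0 T (lmul 0 (sinv T) Q) = Q.
Proof.
move=> sT T0 sQ; have sTQ := lsupp_lmul0 0 (lsupp_sinv T) sQ.
apply/funext/(lpoly_eq (lsupp_lmul0 0 sT sTQ) sQ) => K.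
rewrite (lpoly_lmul sT sTQ) // (lpoly_lmul (lsupp_sinv T) sQ) // lpoly_sinv //.
by rewrite mulrA eqX_mul_trinv ?lpoly_coef0 // mul1r.
Qed.

Lemma phib_le0_lmul_diag d b T S :
  (forall k, is_diag_mx (b k)) -> (forall k, (d < k)%N -> b k = 0) ->
  lsupp 0 T -> T 0 = 1%:M -> lsupp 0 S -> S 0 = 1%:M -> (forall l, is_diag_mx (S l)) ->
  phib_le0 d b (lmul 0 T S) = phib_le0 d b T.
Proof.
move=> db bd sT T0 sS S0 dS; rewrite /phib_le0; congr (Defs.trunc0 _).
have sB := lsupp_lpolyinv bd; have dB := lpolyinv_diag db.
have sQ := lsupp_lmul0 0 sT sS.
have Q0 : lmul 0 T S 0 = 1%:M by rewrite lmul_coef0 T0 S0 mul1mx.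
have sQB := lsupp_lmul d sQ sB; have sTB := lsupp_lmul d sT sB.
apply/funext/(lpoly_eq (lsupp_lmul d sQB (lsupp_sinv _))
                       (lsupp_lmul d sTB (lsupp_sinv T))) => K.
rewrite (lpoly_lmul sQB (lsupp_sinv _) (leqnn _) (leq0n _) erefl).
rewrite (lpoly_lmul sTB (lsupp_sinv T) (leqnn _) (leq0n _) erefl).
rewrite (lpoly_lmul sQ sB (leq0n _) (leqnn _) erefl).
rewrite (lpoly_lmul sT sB (leq0n _) (leqnn _) erefl).
rewrite !lpoly_sinv // (lpoly_lmul sT sS) // eqX_trinvM ?lpoly_coef0 //.
set pT := lpoly 0 K.+1 T; set pS := lpoly 0 K.+1 S; set pB := lpoly d K.+1 (lpolyinv b).
have -> : pT * pS * pB * (trinv K.+1 pS * trinv K.+1 pT) =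
          pT * pB * (pS * trinv K.+1 pS) * trinv K.+1 pT.
  by rewrite -(mulrA pT) (lpoly_diagC 0 d K.+1 dS dB) !mulrA.
by rewrite eqX_mul_trinv ?lpoly_coef0 // mulr1.
Qed.

Lemma lpoly_conj K T dT A : lsupp 0 T -> T 0 = 1%:M -> lsupp 0 dT -> lsupp 1 A ->
  eqX K.+1 (lpoly 1 K.+1 (fun l => lmul 1 (sinv T) dT l + lmul 1 (lmul 1 (sinv T) A) T l))
    ('X * (trinv K.+1 (lpoly 0 K.+1 T) * lpoly 0 K.+1 dT)
     + trinv K.+1 (lpoly 0 K.+1 T) * lpoly 1 K.+1 A * lpoly 0 K.+1 T).
Proof.
move=> sT T0 sdT sA; have sTi := lsupp_sinv T.
have sTd := lsupp_lmul0 1 sTi sdT; have sTA := lsupp_lmul 1 sTi sA.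
rewrite lpolyD (lpoly_mulX sTd) (lpoly_lmul sTi sdT) // (lpoly_lmul sTA sT) //.
by rewrite (lpoly_lmul sTi sA) // lpoly_sinv.
Qed.

Lemma lmul_gauge_conj T S A dT dS eT eT' :
  lsupp 0 T -> T 0 = 1%:M -> lsupp 0 S -> S 0 = 1%:M -> lsupp 0 dT -> lsupp 0 dS ->
  lsupp 1 A -> lsupp 1 eT -> lsupp 1 eT' ->
  (forall l, lmul 1 (sinv T) dT l + lmul 1 (lmul 1 (sinv T) A) T l = eT l) ->
  (forall l, lmul 1 (sinv (lmul 0 T S)) (fun k => lmul 0 dT S k + lmul 0 T dS k) l
     + lmul 1 (lmul 1 (sinv (lmul 0 T S)) A) (lmul 0 T S) l = eT' l) ->
  forall l, lmul 1 eT S l + dS l = lmul 1 S eT' l.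
Proof.
move=> sT T0 sS S0 sdT sdS sA seT seT' eTE eT'E.
have sQ : lsupp 0 (lmul 0 T S) := lsupp_lmul0 0 sT sS.
have Q0 : lmul 0 T S 0 = 1%:M by rewrite lmul_coef0 T0 S0 mul1mx.
have sdQ : lsupp 0 (fun k => lmul 0 dT S k + lmul 0 T dS k).
  by apply: lsupp_add; apply: lsupp_lmul0.
have seTS := lsupp_lmul 1 seT sS.
apply: (lpoly_eq (lsupp_add seTS (lsupp_widen (leq0n 1) sdS)) (lsupp_lmul 1 sS seT')) => K.
rewrite lpolyD (lpoly_lmul seT sS) // (lpoly_mulX sdS) (lpoly_lmul sS seT') //.
rewrite -(funext eTE) -(funext eT'E) !lpoly_conj // lpolyD.
rewrite (lpoly_lmul sdT sS) // (lpoly_lmul sT sdS) // !(lpoly_lmul sT sS) //.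
rewrite eqX_trinvM ?lpoly_coef0 //.
set pT := lpoly 0 K.+1 T; set pS := lpoly 0 K.+1 S.
have -> : pS * ('X * (trinv K.+1 pS * trinv K.+1 pT
                       * (lpoly 0 K.+1 dT * pS + pT * lpoly 0 K.+1 dS))
               + trinv K.+1 pS * trinv K.+1 pT * lpoly 1 K.+1 A * (pT * pS))
  = 'X * (pS * trinv K.+1 pS) * (trinv K.+1 pT * lpoly 0 K.+1 dT * pS)
    + 'X * (pS * trinv K.+1 pS) * (trinv K.+1 pT * pT) * lpoly 0 K.+1 dS
    + pS * trinv K.+1 pS * (trinv K.+1 pT * lpoly 1 K.+1 A * pT * pS).
  by rewrite !mulrDr !mulrA (commr_polyX pS).
rewrite eqX_mul_trinv ?lpoly_coef0 // eqX_trinv_mul ?lpoly_coef0 // !mulr1 !mul1r.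
by rewrite mulrDl !mulrA addrAC; reflexivity.
Qed.

End LaurentSeries.

Section MatrixCalculus.
Variables (R : realType) (n : nat).
Local Notation C := R[i].
Local Notation V := 'rV[C]_n.+1.
Local Notation VN := ('rV[C]_n.+1 : normedModType C).
Local Notation M := 'M[C]_n.+1.
Local Notation ser := (lser R n.+1).

Section Entries.
Variables (a b : nat).
Implicit Types f : V -> 'M[C]_(a, b).

Lemma entry_is_linear i j : linear (fun N : 'M[C]_(a, b) => (N i j : C^o)).
Proof. by move=> k x y; rewrite !mxE. Qed.

Definition mxcoord i j : {linear 'M[C]_(a, b) -> C^o} :=
  HB.pack (fun N : 'M[C]_(a, b) => (N i j : C^o))
    (GRing.isLinear.Build _ _ _ _ _ (entry_is_linear i j)).

Lemma mxcoord_continuous i j :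
  continuous (mxcoord i j : ('M[C]_(a, b) : normedModType C) -> C^o).
Proof. exact: coord_continuous. Qed.

Lemma differentiable_entry f z i j :
  differentiable f z -> differentiable (fun p => (f p i j : C^o)) z.
Proof. by move=> df; apply: differentiable_comp df (differentiable_coord _ i j). Qed.

Lemma derive_entry f z v i j :
  differentiable f z -> 'D_v (fun p => (f p i j : C^o)) z = ('D_v f z) i j.
Proof.
move=> df; have dc := linear_differentiable (f z) (@mxcoord_continuous i j).
have -> : (fun p => (f p i j : C^o)) = mxcoord i j \o f by [].
rewrite deriveE; last exact: differentiable_comp.
by rewrite diff_comp // diff_lin /= ?deriveE //; exact: mxcoord_continuous.
Qed.

Lemma differentiable_entries f z :
  (forall i j, differentiable (fun p => (f p i j : C^o)) z) -> differentiable f z.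
Proof.
move=> h; have -> : f = (fun p => \sum_(i < a) \sum_(j < b) (f p i j : C^o) *: delta_mx i j).
  by apply: funext => p; rewrite {1}(matrix_sum_delta (f p)).
rewrite -fct_sumE; apply: differentiable_sum => i.
by rewrite -fct_sumE; apply: differentiable_sum => j; exact: differentiableZl.
Qed.

End Entries.

Lemma mulmx_entry_fun (f g : V -> M) i j :
  (fun p => ((f p *m g p) i j : C^o)) =
  \sum_(k < n.+1) ((fun p => (f p i k : C^o)) * (fun p => (g p k j : C^o))).
Proof. by apply: funext => p; rewrite mxE fct_sumE. Qed.

Lemma differentiable_mulmx (f g : V -> M) z : differentiable f z -> differentiable g z ->
  differentiable (fun p => f p *m g p) z.
Proof.
move=> df dg; apply: differentiable_entries => i j; rewrite mulmx_entry_fun.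
by apply: differentiable_sum => k; apply: differentiableM; exact: differentiable_entry.
Qed.

Lemma derive_mulmx (f g : V -> M) z v : differentiable f z -> differentiable g z ->
  'D_v (fun p => f p *m g p) z = 'D_v f z *m g z + f z *m 'D_v g z.
Proof.
move=> df dg; apply/matrixP => i j.
rewrite -derive_entry; last exact: differentiable_mulmx.
have dfe k := differentiable_entry i k df; have dge k := differentiable_entry k j dg.
rewrite mulmx_entry_fun derive_sum; last first.
  by move=> k; apply/diff_derivable/differentiableM.
rewrite !mxE -big_split; apply: eq_bigr => k _ /=.
rewrite deriveM; [|exact/diff_derivable/dfe|exact/diff_derivable/dge].
by rewrite !derive_entry // addrC; congr (_ + _); exact: mulrC.
Qed.

Lemma differentiable_lmul N (x y : V -> ser) z :
  (forall l, differentiable (fun p => x p l) z) ->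
  (forall l, differentiable (fun p => y p l) z) ->
  forall l, differentiable (fun p => lmul N (x p) (y p) l) z.
Proof.
move=> dx dy l; rewrite /lmul; case: (l + _ < 0); first exact: differentiable_cst.
by rewrite -fct_sumE; apply: differentiable_sum => k; exact: differentiable_mulmx.
Qed.

Lemma derive_lmul N (x y : V -> ser) z v :
  (forall l, differentiable (fun p => x p l) z) ->
  (forall l, differentiable (fun p => y p l) z) ->
  forall l, 'D_v (fun p => lmul N (x p) (y p) l) z =
    lmul N (fun k => 'D_v (fun p => x p k) z) (y z) l
    + lmul N (x z) (fun k => 'D_v (fun p => y p k) z) l.
Proof.
move=> dx dy l; rewrite /lmul; case: (l + _ < 0); first by rewrite derive_cst addr0.
rewrite -fct_sumE derive_sum; last by move=> k; apply/diff_derivable/differentiable_mulmx.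
by rewrite -big_split; apply: eq_bigr => k _ /=; exact: derive_mulmx.
Qed.

Lemma differentiable_sinv (x : V -> ser) z :
  (forall l, differentiable (fun p => x p l) z) ->
  forall l, differentiable (fun p => sinv (x p) l) z.
Proof.
move=> dx l; rewrite /sinv; case: (l < 0); first exact: differentiable_cst.
rewrite -fct_sumE; apply: differentiable_sum => -[m _] /=.
elim: m l => [|m IH] l' /=; first exact: differentiable_cst.
apply: differentiable_lmul; last exact: IH.
by move=> k; apply: differentiableB; [exact: differentiable_cst | exact: dx].
Qed.

Lemma differentiable_phib_le0 d b (x : V -> ser) z :
  (forall l, differentiable (fun p => x p l) z) ->
  forall l, differentiable (fun p => phib_le0 d b (x p) l) z.
Proof.
move=> dx l; rewrite /phib_le0 /Defs.trunc0; case: (l <= 0); last exact: differentiable_cst.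
apply: differentiable_lmul; last exact: differentiable_sinv.
by apply: differentiable_lmul => [|k]; [exact: dx | exact: differentiable_cst].
Qed.

Lemma derive_comp_rdir (W : normedModType C) (f : VN -> W) (u : VN -> VN) z a :
  differentiable u z -> differentiable f (u z) ->
  'D_(rdir R a) (f \o u) z = \sum_(i < n.+1) jac u i a z *: 'D_(rdir R i) f (u z).
Proof.
move=> du df; have dfu : differentiable (f \o u) z := differentiable_comp du df.
rewrite (deriveE _ dfu) (diff_comp du df) /= -(deriveE _ du).
rewrite {1}(row_sum_delta ('D_(rdir R a) u z)) linear_sum.
by apply: eq_bigr => i _; rewrite linearZ /= -(deriveE _ df).
Qed.

Lemma lmul_sumr N (x : ser) (c : 'I_n.+1 -> C) (y : 'I_n.+1 -> ser) l :
  lmul N x (fun k => \sum_(i < n.+1) c i *: y i k) l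
  = \sum_(i < n.+1) c i *: lmul N x (y i) l.
Proof.
rewrite /lmul; case: (_ < 0); first by rewrite big1 // => i _; rewrite scaler0.
under eq_bigr => k _ do rewrite mulmx_sumr.
rewrite exchange_big; apply: eq_bigr => i _; rewrite scaler_sumr.
by apply: eq_bigr => k _; rewrite scalemxAr.
Qed.

Lemma lmul_suml N (x : ser) (c : 'I_n.+1 -> C) (y : 'I_n.+1 -> ser) l :
  lmul N (fun k => \sum_(i < n.+1) c i *: y i k) x l
  = \sum_(i < n.+1) c i *: lmul N (y i) x l.
Proof.
rewrite /lmul; case: (_ < 0); first by rewrite big1 // => i _; rewrite scaler0.
under eq_bigr => k _ do rewrite mulmx_suml.
rewrite exchange_big; apply: eq_bigr => i _; rewrite scaler_sumr.
by apply: eq_bigr => k _; rewrite scalemxAl.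
Qed.

End MatrixCalculus.

Section Diagonal.
Variables (R : realType) (n : nat).
Local Notation C := R[i].
Local Notation M := 'M[C]_n.+1.
Local Notation ser := (lser R n.+1).

Lemma is_diag_sum (c : 'I_n.+1 -> C) (A : 'I_n.+1 -> M) :
  (forall i, is_diag_mx (A i)) -> is_diag_mx (\sum_(i < n.+1) c i *: A i).
Proof.
move=> dA; apply/is_diag_mxP => r s rs; rewrite summxE big1 // => i _.
by rewrite mxE; move/is_diag_mxP: (dA i) => ->; rewrite ?mulr0.
Qed.

Lemma diag_mulmx_offdiag (A B : M) r c : is_diag_mx A -> is_diag_mx B -> r != c ->
  (A *m B) r c = 0.
Proof.
move=> /is_diag_mxP dA /is_diag_mxP dB rc; rewrite mxE big1 // => k _.
by case: (eqVneq r k) => [<-|rk]; [rewrite dB ?mulr0 | rewrite dA ?mul0r].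
Qed.

Section OffDiagonal.
Variables (E S : ser) (w : 'rV[C]_n.+1) (m : nat) (r c : 'I_n.+1).
Hypotheses (rc : r != c) (E_lead : E (-1) = - diag_mx w)
  (dE : forall k : nat, is_diag_mx (E k))
  (sS : lsupp 0 S) (dS : forall k : nat, (k <= m)%N -> is_diag_mx (S k)).

Lemma lmul_offdiagl : (lmul 1 E S m) r c = - (w 0 r * S m.+1 r c).
Proof.
rewrite /lmul; have -> : m%:Z + (2 * 1)%N%:Z = m.+2%:Z by lia.
rewrite /= big_ord_recl /= mxE summxE big1 ?addr0.
  have -> : 0%:Z - 1%:Z = -1 by [].
  have -> : m%:Z + 1%Z = m.+1%:Z by lia.
  by rewrite E_lead mulNmx mxE mul_diag_mx mxE.
move=> k _; rewrite /bump /=; have -> : (1 + k)%N%:Z - 1%:Z = k%:Z by lia.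
have [km|km] := leqP k m; last by rewrite sS ?mulmx0 ?mxE //; lia.
have -> : m%:Z - (1 + k)%N%:Z + 1%:Z = (m - k)%N%:Z by lia.
by apply: diag_mulmx_offdiag => //; apply: dS; exact: leq_subr.
Qed.

Lemma lmul_offdiagr : (lmul 1 S E m) r c = - (S m.+1 r c * w 0 c).
Proof.
rewrite /lmul; have -> : m%:Z + (2 * 1)%N%:Z = m.+2%:Z by lia.
rewrite /= big_ord_recr /= mxE summxE big1 ?add0r.
  have -> : m.+2%:Z - 1%:Z = m.+1%:Z by lia.
  have -> : m%:Z - m.+2%:Z + 1%:Z = -1 by lia.
  by rewrite E_lead mulmxN mxE mul_mx_diag mxE.
move=> [[|k] hk] _ /=; first by rewrite sS ?mul0mx ?mxE.
have -> : k.+1%:Z - 1%:Z = k%:Z by lia.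
have -> : m%:Z - k.+1%:Z + 1%:Z = (m - k)%N%:Z by lia.
by apply: diag_mulmx_offdiag => //; apply: dS; lia.
Qed.

End OffDiagonal.

(* The order-m part of [E S + dS = S E'] reads
   (w_r - w_c) S_{m+1,rc} = 0 off the diagonal, once S is diagonal up to order m. *)
Lemma gauge_offdiag_succ (E E' S dS : ser) (w : 'rV[C]_n.+1) m r c :
  r != c -> w 0 r != w 0 c ->
  E (-1) = - diag_mx w -> E' (-1) = - diag_mx w ->
  (forall k : nat, is_diag_mx (E k)) -> (forall k : nat, is_diag_mx (E' k)) ->
  lsupp 0 S -> (forall k : nat, (k <= m)%N -> is_diag_mx (S k)) -> dS m r c = 0 ->
  lmul 1 E S m + dS m = lmul 1 S E' m -> S m.+1 r c = 0.
Proof.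
move=> rc wrc E1 E'1 dE dE' sS Sdiag dS0 /(congr1 (fun N : M => N r c)) /=.
rewrite mxE (lmul_offdiagl rc E1 dE sS Sdiag) (lmul_offdiagr rc E'1 dE' sS Sdiag).
rewrite dS0 addr0 => /eqP.
rewrite eqr_opp mulrC -subr_eq0 -mulrBr mulf_eq0 subr_eq0 (negbTE wrc) orbF.
by move/eqP.
Qed.

End Diagonal.

Section Jacobian.
Variables (R : realType) (n : nat).
Local Notation C := R[i].
Local Notation V := ('rV[C]_n.+1 : normedModType C).

Lemma near_open (D : set 'rV[C]_n.+1) x : open_rV D -> D x -> \forall y \near (x : V), D y.
Proof. by move=> oD Dx0; apply: open_nbhs_nbhs; split. Qed.

Variables (Dx Du : set 'rV[C]_n.+1) (u v : 'rV[C]_n.+1 -> 'rV[C]_n.+1).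
Hypotheses (oDu : open_rV Du)
  (du : forall x, Dx x -> cdiff_rr u x)
  (vu : forall x, Dx x -> Du (u x) /\ v (u x) = x)
  (uv : forall y, Du y -> Dx (v y) /\ u (v y) = y)
  (dv : forall y, Du y -> cdiff_rr v y).

Lemma jac_left_inv x k i : Dx x ->
  \sum_(a < n.+1) jac v a k (u x) * jac u i a x = (i == k)%:R.
Proof.
move=> Dx0; have [Duy vux] := vu Dx0.
have duv : differentiable (u : V -> V) (v (u x) : V) by rewrite vux; exact: du.
have := derive_comp_rdir (f := u : V -> V) (u := v : V -> V) k (dv Duy) duv.
have -> : 'D_(rdir R k) ((u : V -> V) \o (v : V -> V)) (u x : V) = rdir R k.
  rewrite (near_eq_derive (g := id)) ?derive_id //.
  by apply: filterS (near_open oDu Duy) => y /uv[].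
rewrite vux => /(congr1 (fun N : 'rV[C]_n.+1 => N 0 i)).
rewrite /rdir mxE eqxx /= summxE => ->.
by apply: eq_bigr => a _; rewrite mxE.
Qed.

Lemma jac_separates x r c : Dx x -> r != c -> exists a, jac u r a x != jac u c a x.
Proof.
move=> Dx0 rc; apply/existsP; apply: contraT => /existsPn same.
have := jac_left_inv r c Dx0; rewrite eq_sym (negbTE rc).
rewrite (eq_bigr (fun a => jac v a r (u x) * jac u r a x)); last first.
  by move=> a _; move/negbNE/eqP: (same a) ->.
by rewrite jac_left_inv // eqxx => /eqP; rewrite eqr_nat.
Qed.

End Jacobian.

Lemma lin_comb_inj (K : pzRingType) (V : lmodType K) m (J L : 'I_m -> 'I_m -> K)
    (X : 'I_m -> V) :
  (forall i k, \sum_(a < m) L k a * J i a = (i == k)%:R) ->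
  (forall a, \sum_(i < m) J i a *: X i = 0) -> forall k, X k = 0.
Proof.
move=> LJ JX k; have -> : X k = \sum_(i < m) (i == k)%:R *: X i.
  by rewrite (bigD1 k) //= eqxx scale1r big1 ?addr0 // => i /negbTE ->; rewrite scale0r.
under eq_bigr => i _ do rewrite -LJ scaler_suml.
rewrite exchange_big big1 // => a _.
by under eq_bigr => i _ do rewrite -scalerA; rewrite -scaler_sumr JX scaler0.
Qed.

Lemma lsupp_pderiv (R : realType) n s i (F : 'rV[R[i]]_n.+1 -> lser R n.+1) p :
  (forall p, lsupp s (F p)) -> lsupp s (pderiv i F p).
Proof.
move=> sF l ls; rewrite /pderiv.
by rewrite (_ : (fun p' => F p' l) = cst 0) ?derive_cst //; apply/funext => p'; rewrite sF.
Qed.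

Lemma lsupp_Ax (R : realType) n u q a (x : 'rV[R[i]]_n.+1) t : lsupp 1 (Ax u q a x t).
Proof.
move=> l l1; rewrite /Ax big1 // => i _; rewrite /Au /lpot.
have [-> ->] : (l == 0) = false /\ (l == -1) = false by split; apply/negbTE; lia.
by rewrite scaler0.
Qed.

Lemma lsupp_dressing (R : realType) n D A E (S : 'rV[R[i]]_n.+1 -> lser R n.+1) :
  is_dressing D A E S -> forall p, lsupp 0 (S p).
Proof. by case=> Sneg _ _ _ p l; apply: Sneg. Qed.

Section ChangeOfCoordinates.
Variables (R : realType) (n : nat).
Local Notation C := R[i].
Local Notation M := 'M[C]_n.+1.
Local Notation ser := (lser R n.+1).
Local Notation V := ('rV[C]_n.+1 : normedModType C).

Variables (Dx Du : set 'rV[C]_n.+1) (Th : set C) (u v : 'rV[C]_n.+1 -> 'rV[C]_n.+1)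
  (q : 'I_n.+1 -> 'rV[C]_n.+1 -> C -> M) (T T' : 'rV[C]_n.+1 -> C -> ser).
Hypotheses (oDx : open_rV Dx) (oDu : open_rV Du)
  (du : forall x, Dx x -> cdiff_rr u x)
  (vu : forall x, Dx x -> Du (u x) /\ v (u x) = x)
  (uv : forall y, Du y -> Dx (v y) /\ u (v y) = y)
  (dv : forall y, Du y -> cdiff_rr v y)
  (dT : forall t, Th t -> is_dressing Du (fun i y => Au q i y t)
                                      (fun i _ => eunit R i) (fun y => T y t))
  (dT' : forall t, Th t -> is_dressing Dx (fun a x => Ax u q a x t) (amat u)
                                       (fun x => T' x t)).

Lemma amat_sum a x : amat u a x = \sum_(i < n.+1) jac u i a x *: eunit R i.
Proof. by rewrite /amat diag_mx_sum_delta; apply: eq_bigr => i _; rewrite mxE. Qed.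

Lemma differentiable_Tu t x l : Th t -> Dx x ->
  differentiable (fun p : V => T (u p) t l) (x : V).
Proof.
move=> tTh Dx0; have [_ _ Tdf _] := dT tTh; have [Duy _] := vu Dx0.
exact: differentiable_comp (du Dx0) (Tdf l (u x) Duy).
Qed.

Lemma dressing_comp t h : Th t ->
  (forall i p, Du p -> forall l,
     lmul 1 (sinv (T p t)) (pderiv i (fun y => T y t) p) l
     + lmul 1 (lmul 1 (sinv (T p t)) (Au q i p t)) (T p t) l
     = ltarget (eunit R i) (h i p) l) ->
  forall a x, Dx x -> forall l,
     lmul 1 (sinv (T (u x) t)) (pderiv a (fun p => T (u p) t) x) l
     + lmul 1 (lmul 1 (sinv (T (u x) t)) (Ax u q a x t)) (T (u x) t) l
     = ltarget (amat u a x) (fun k => \sum_(i < n.+1) jac u i a x *: h i (u x) k) l.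
Proof.
move=> tTh heq a x Dx0 l; have [Duy _] := vu Dx0; have [_ _ Tdf _] := dT tTh.
have -> : pderiv a (fun p => T (u p) t) x =
    (fun k => \sum_(i < n.+1) jac u i a x *: pderiv i (fun y => T y t) (u x) k).
  by apply/funext => k; exact: derive_comp_rdir (du Dx0) (Tdf k (u x) Duy).
have -> : lmul 1 (sinv (T (u x) t)) (Ax u q a x t) =
    (fun k => \sum_(i < n.+1) jac u i a x *: lmul 1 (sinv (T (u x) t)) (Au q i (u x) t) k).
  by apply/funext => k; rewrite -lmul_sumr.
rewrite lmul_sumr lmul_suml -big_split /=.
under eq_bigr do rewrite -scalerDr heq //.
rewrite /ltarget; case: (l == -1) => //.
by rewrite amat_sum -sumrN; apply: eq_bigr => i _; rewrite scalerN.
Qed.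

Definition gauge t x := lmul 0 (sinv (T (u x) t)) (T' x t).

Lemma lsupp_gauge t x : Th t -> lsupp 0 (gauge t x).
Proof. by move=> tTh; apply: lsupp_lmul0 (lsupp_sinv _) (lsupp_dressing (dT' tTh) x). Qed.

Lemma gauge0 t x : Th t -> gauge t x 0 = 1%:M.
Proof.
by move=> tTh; have [_ T'0 _ _] := dT' tTh; rewrite /gauge lmul_coef0 sinv_coef0 T'0 mul1mx.
Qed.

Lemma gaugeK t x : Th t -> T' x t = lmul 0 (T (u x) t) (gauge t x).
Proof.
move=> tTh; have [_ T0 _ _] := dT tTh.
rewrite /gauge lmul_sinvK //; first exact: lsupp_dressing (dT tTh) _.
exact: lsupp_dressing (dT' tTh) _.
Qed.

Lemma differentiable_gauge t x l : Th t -> Dx x ->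
  differentiable (fun p : V => gauge t p l) (x : V).
Proof.
move=> tTh Dx0; have [_ _ T'df _] := dT' tTh; rewrite /gauge.
apply: differentiable_lmul => k; last exact: T'df.
by apply: differentiable_sinv => k'; exact: differentiable_Tu.
Qed.

Lemma gauge_conj t a x eR eQ : Th t -> Dx x -> lsupp 1 eR -> lsupp 1 eQ ->
  (forall l, lmul 1 (sinv (T (u x) t)) (pderiv a (fun p => T (u p) t) x) l
     + lmul 1 (lmul 1 (sinv (T (u x) t)) (Ax u q a x t)) (T (u x) t) l = eR l) ->
  (forall l, lmul 1 (sinv (T' x t)) (pderiv a (fun p => T' p t) x) l
     + lmul 1 (lmul 1 (sinv (T' x t)) (Ax u q a x t)) (T' x t) l = eQ l) ->
  forall l, lmul 1 eR (gauge t x) l + pderiv a (gauge t) x l = lmul 1 (gauge t x) eQ l.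
Proof.
move=> tTh Dx0 seR seQ eRE eQE.
have sT := lsupp_dressing (dT tTh); have [_ T0 _ _] := dT tTh.
have sS p : lsupp 0 (gauge t p) := lsupp_gauge p tTh.
have dT'E : pderiv a (fun p => T' p t) x = fun k =>
    lmul 0 (pderiv a (fun p => T (u p) t) x) (gauge t x) k
    + lmul 0 (T (u x) t) (pderiv a (gauge t) x) k.
  rewrite (_ : (fun p => T' p t) = fun p => lmul 0 (T (u p) t) (gauge t p)).
    apply/funext => k; apply: derive_lmul => k'.
      exact: differentiable_Tu.
    exact: differentiable_gauge.
  by apply/funext => p; exact: gaugeK.
rewrite dT'E (gaugeK x tTh) in eQE.
apply: (lmul_gauge_conj (sT (u x)) (T0 (u x)) (sS x) (gauge0 x tTh) _ _
  (lsupp_Ax u q a x t) seR seQ eRE eQE).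
  exact: lsupp_pderiv (fun p => sT (u p)).
exact: lsupp_pderiv sS.
Qed.

Lemma gauge_diag t : Th t -> forall (m : nat) x, Dx x -> is_diag_mx (gauge t x m).
Proof.
move=> tTh; have [_ _ _ [h [hdiag hneg heq]]] := dT tTh.
have [_ _ _ [h' [h'diag h'neg h'eq]]] := dT' tTh.
elim/ltn_ind => -[|m] IH x Dx0; first by rewrite gauge0 //; exact: scalar_mx_is_diag.
apply/is_diag_mxP => r c rc; have [a ha] := jac_separates oDu du vu uv dv Dx0 rc.
set eR := ltarget (amat u a x) (fun k => \sum_(i < n.+1) jac u i a x *: h i (u x) k).
set eQ := ltarget (amat u a x) (h' a x).
have seR : lsupp 1 eR.
  by apply: lsupp_ltarget => l l0; rewrite big1 // => i _; rewrite hneg ?scaler0.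
have seQ : lsupp 1 eQ by apply: lsupp_ltarget => l l0; rewrite h'neg.
have deR (k : nat) : is_diag_mx (eR k).
  by rewrite /eR ltarget_nat; apply: is_diag_sum => i; exact: hdiag.
have deQ (k : nat) : is_diag_mx (eQ k) by rewrite /eQ ltarget_nat.
have dS0 : pderiv a (gauge t) x m r c = 0.
  rewrite /pderiv -derive_entry; last exact: differentiable_gauge.
  rewrite (near_eq_derive (g := cst 0)) ?derive_cst //.
  apply: filterS (near_open oDx Dx0) => p Dp.
  by move/is_diag_mxP: (IH m (ltnSn m) p Dp) => ->.
apply: (gauge_offdiag_succ (w := \row_i jac u i a x) rc _ _ _ deR deQ
  (lsupp_gauge x tTh) (fun k km => IH k km x Dx0) dS0).
- by rewrite !mxE.
- exact: ltarget_lead.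
- exact: ltarget_lead.
apply: (gauge_conj tTh Dx0 seR seQ) => l; first exact: (dressing_comp tTh heq).
exact: h'eq.
Qed.

Variables (d : nat) (b : nat -> M).
Hypotheses (db : forall k, is_diag_mx (b k)) (bd : forall k, (d < k)%N -> b k = 0)
  (dqt : forall i t y, Th t -> Du y -> cdiff_CM (q i y) t).

Lemma phib_le0_gauge t x : Th t -> Dx x ->
  phib_le0 d b (T' x t) = phib_le0 d b (T (u x) t).
Proof.
move=> tTh Dx0; have [_ T0 _ _] := dT tTh.
rewrite (gaugeK x tTh) phib_le0_lmul_diag //.
- exact: lsupp_dressing (dT tTh) _.
- exact: lsupp_gauge.
- exact: gauge0.
by case=> m; [exact: gauge_diag | rewrite (lsupp_gauge x tTh) ?mx0_is_diag].
Qed.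

Definition lax_defect (A : 'I_n.+1 -> 'rV[C]_n.+1 -> C -> ser) (S : 'rV[C]_n.+1 -> C -> ser)
    i p t l : M :=
  tderiv (A i p) t l - (- pderiv i (fun p' => phib_le0 d b (S p' t)) p l
    + lmul d.+1 (phib_le0 d b (S p t)) (A i p t) l
    - lmul d.+1 (A i p t) (phib_le0 d b (S p t)) l).

Lemma lax_eqP D A S :
  lax_eq D Th A S d b <-> forall i p t, D p -> Th t -> forall l, lax_defect A S i p t l = 0.
Proof.
split=> H i p t Dp tTh l; apply/eqP.
- by rewrite /lax_defect subr_eq0; apply/eqP; exact: H.
- by rewrite -subr_eq0; apply/eqP; exact: H.
Qed.

Lemma tderiv_Ax a x t l : Th t -> Dx x ->
  tderiv (Ax u q a x) t l = \sum_(i < n.+1) jac u i a x *: tderiv (Au q i (u x)) t l.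
Proof.
move=> tTh Dx0; have [Duy _] := vu Dx0.
have dAu i : derivable (fun s : C^o => Au q i (u x) s l) t 1.
  rewrite /Au /lpot; case: (l == 0); last exact: derivable_cst.
  exact: diff_derivable (dqt i tTh Duy).
rewrite /tderiv (_ : (fun s : C^o => Ax u q a x s l) =
    \sum_(i < n.+1) jac u i a x \*: (fun s : C^o => Au q i (u x) s l)); last first.
  by apply/funext => s; rewrite fct_sumE.
rewrite derive_sum; last by move=> i; apply: derivableZ.
by apply: eq_bigr => i _; rewrite deriveZ.
Qed.

Lemma pderiv_phib_le0_gauge a x t l : Th t -> Dx x ->
  pderiv a (fun p => phib_le0 d b (T' p t)) x l
  = \sum_(i < n.+1) jac u i a x *: pderiv i (fun p => phib_le0 d b (T p t)) (u x) l.
Proof.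
move=> tTh Dx0; have [Duy _] := vu Dx0; have [_ _ Tdf _] := dT tTh.
have near_gauge : \forall p \near (x : V),
    phib_le0 d b (T' p t) l = phib_le0 d b (T (u p) t) l.
  by apply: filterS (near_open oDx Dx0) => p Dp; rewrite phib_le0_gauge.
have dphi := differentiable_phib_le0 d b (fun k => Tdf k (u x) Duy) l.
exact: etrans (near_eq_derive (rdir R a) near_gauge)
  (derive_comp_rdir (f := fun y : V => phib_le0 d b (T y t) l) (u := u : V -> V) a
     (du Dx0) dphi).
Qed.

Lemma lax_defect_comp a x t l : Th t -> Dx x ->
  lax_defect (Ax u q) T' a x t l
  = \sum_(i < n.+1) jac u i a x *: lax_defect (Au q) T i (u x) t l.
Proof.
move=> tTh Dx0; rewrite /lax_defect tderiv_Ax // pderiv_phib_le0_gauge // phib_le0_gauge //.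
rewrite /Ax lmul_sumr lmul_suml.
under [RHS]eq_bigr do rewrite !scalerBr scalerDr scalerN.
by rewrite !sumrB big_split sumrN.
Qed.

Lemma lax_equiv : lax_eq Du Th (Au q) T d b <-> lax_eq Dx Th (Ax u q) T' d b.
Proof.
split=> /lax_eqP H; apply/lax_eqP.
- move=> a x t Dx0 tTh l; have [Duy _] := vu Dx0.
  by rewrite lax_defect_comp // big1 // => i _; rewrite H ?scaler0.
- move=> i y t Duy tTh l; have [Dx0 <-] := uv Duy.
  pose X k := lax_defect (Au q) T k (u (v y)) t l.
  have inv i k := jac_left_inv oDu du vu uv dv k i Dx0.
  apply: (lin_comb_inj (X := X) inv) => a.
  by rewrite -lax_defect_comp // H.
Qed.

End ChangeOfCoordinates.

Unset Implicit Arguments.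
Local Open Scope classical_set_scope.

Theorem mainTheorem5 (R : realType) (n : nat)
    (Dx Du : set 'rV[R[i]]_n) (Th : set R[i])
    (u : 'rV[R[i]]_n -> 'rV[R[i]]_n)
    (q : 'I_n -> 'rV[R[i]]_n -> R[i] -> 'M[R[i]]_n)
    (d : nat) (b : nat -> 'M[R[i]]_n)
    (T : 'rV[R[i]]_n -> R[i] -> lser R n) (T' : 'rV[R[i]]_n -> R[i] -> lser R n) :
  (* Dx is a domain, u : Dx -> Du an analytic change of coordinates *)
  open_rV Dx -> connected_rV Dx -> open_rV Du -> open_C Th ->
  (forall x, Dx x -> cdiff_rr u x) ->
  (exists v : 'rV[R[i]]_n -> 'rV[R[i]]_n,
     [/\ forall x, Dx x -> Du (u x) /\ v (u x) = x,
         forall y, Du y -> Dx (v y) /\ u (v y) = y &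
         forall y, Du y -> cdiff_rr v y]) ->
  (* regularity of the potentials q_i(u,t) *)
  (forall i t y, Th t -> Du y -> cdiff_rM (fun y' => q i y' t) y) ->
  (forall i t y, Th t -> Du y -> cdiff_CM (q i y) t) ->
  (* for each t the operators L_i(u,t) pairwise commute *)
  (forall t, Th t -> commuting Du (fun i y => Au q i y t)) ->
  (* b in Diag[hbar^{-1}] *)
  (forall k, is_diag_mx (b k)) -> (forall k, (d < k)%N -> b k = 0) ->
  (* T, T' are the dressing transformations of the two families *)
  (forall t, Th t -> is_dressing Du (fun i y => Au q i y t) (fun i _ => @eunit R n i)
                                 (fun y => T y t)) ->
  (forall t, Th t -> is_dressing Dx (fun a x => Ax u q a x t) (amat u)
                                 (fun x => T' x t)) ->
  (lax_eq Du Th (Au q) T d b <-> lax_eq Dx Th (Ax u q) T' d b).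
Proof.
case: n Dx Du u q b T T' => [|n] Dx Du u q b T T'.
  by move=> *; split=> _ i p t _ _ l; apply/matrixP => r c; case: r.
move=> oDx _ oDu _ du [v [vu uv dv]] _ dqt _ db bd dT dT'.
exact: (lax_equiv oDx oDu du vu uv dv dT dT' db bd dqt).
Qed.
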